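(* Let $G=(V,E)$ be a directed acyclic graph with real edge weights, let $s_1,t_1,s_2,t_2\in V$, and let $E_\cap=E(s_1,t_1)\cap E(s_2,t_2)$. Let $(P_1,P_2)\in\Pi(s_1,t_1)\times\Pi(s_2,t_2)$ and let $x,y\in V$ be such that $x$ precedes $y$ on both $P_1$ and $P_2$. Then all edges of the subpaths $P_1[x,y]$ and $P_2[x,y]$ belong to $E_\cap$.
   Context: $\Pi(x,y)$ is the set of shortest (minimum weight) paths from $x$ to $y$; $E(x,y)$ is the set of edges lying on at least one path in $\Pi(x,y)$. For a path $P$, $x$ precedes $y$ on $P$ if $x=y$ or $x$ appears before $y$; $P[x,y]$ is the subpath from $x$ to $y$. *)

From mathcomp Require Import all_boot all_order all_algebra.
Set Implicit Arguments. Unset Strict Implicit. Unset Printing Implicit Defensive.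
Import Order.TTheory GRing.Theory Num.Theory.
Local Open Scope ring_scope.

Section Graphs.
Variables (T : finType) (R : realDomainType) (e : rel T) (w : T -> T -> R).

Definition acyclic : Prop :=
  forall (x : T) (p : seq T), path e x p -> last x p = x -> p = [::].

Definition is_path (s t : T) (P : seq T) : bool :=
  if P is x :: p then [&& x == s, path e x p & last x p == t] else false.

Definition pedges (P : seq T) : seq (T * T) := zip P (behead P).

Definition pweight (P : seq T) : R := \sum_(uv <- pedges P) w uv.1 uv.2.

Definition is_shortest (s t : T) (P : seq T) : Prop :=
  is_path s t P /\ forall Q, is_path s t Q -> pweight P <= pweight Q.

Definition Eset (s t : T) (uv : T * T) : Prop :=
  exists P, is_shortest s t P /\ uv \in pedges P.

Definition precedes (x y : T) (P : seq T) : bool :=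
  [&& x \in P, y \in P & index x P <= index y P]%N.

Definition subpath (P : seq T) (x y : T) : seq T :=
  drop (index x P) (take (index y P).+1 P).

End Graphs.

From mathcomp Require Import all_boot all_order all_algebra.
Import Order.TTheory GRing.Theory Num.Theory.
Local Open Scope ring_scope.

(* Write P1 = A1 ++ P1[x,y] ++ B1 and P2 = A2 ++ P2[x,y] ++ B2.  Exchanging
   the two middle sections turns each Pi into another si-ti walk, so each
   section weighs at most the other; hence they weigh the same and all four
   spliced walks are shortest, which puts every edge of either section into
   both E(s1,t1) and E(s2,t2). *)

Set Implicit Arguments. Unset Strict Implicit.

Section Splicing.
Variables (T : finType) (R : realDomainType) (e : rel T) (w : T -> T -> R).

Lemma pedges_cat (h : T) p q :
  pedges (h :: p ++ q) = pedges (h :: p) ++ pedges (last h p :: q).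
Proof. by elim: p h => [|z p IHp] h //=; rewrite -IHp. Qed.

Lemma pedges_split (A : seq T) x m B :
  pedges (A ++ x :: m ++ B) =
  pedges (rcons A x) ++ pedges (x :: m) ++ pedges (last x m :: B).
Proof.
case: A => [|z A] /=; first by rewrite pedges_cat.
by rewrite -cats1 pedges_cat /= pedges_cat -catA /= -(pedges_cat x m).
Qed.

Lemma pweight_split (A : seq T) x m B :
  pweight w (A ++ x :: m ++ B) =
  pweight w (rcons A x) + pweight w (x :: m) + pweight w (last x m :: B).
Proof. by rewrite /pweight pedges_split !big_cat /= addrA. Qed.

Lemma mem_pedges_split (A : seq T) x m B uv :
  uv \in pedges (x :: m) -> uv \in pedges (A ++ x :: m ++ B).
Proof. by rewrite pedges_split !mem_cat => ->; rewrite orbT. Qed.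

Lemma is_path_split_mid s t (A : seq T) x m B :
  is_path e s t (A ++ x :: m ++ B) -> path e x m.
Proof.
case: A => [|z A] /=; case/and3P => _; rewrite cat_path; first by case/andP.
by rewrite /= cat_path => /and3P[_ _ /andP[]].
Qed.

Lemma is_path_splice s t (A : seq T) x m m' B :
  is_path e s t (A ++ x :: m ++ B) -> path e x m' -> last x m' = last x m ->
  is_path e s t (A ++ x :: m' ++ B).
Proof.
move=> + pm' lm; case: A => [|z A] /=; case/and3P => ->.
  by rewrite !cat_path !last_cat pm' lm => /andP[_ ->].
rewrite !cat_path !last_cat /= !cat_path !last_cat pm' lm.
by case/and3P => -> -> /andP[_ ->].
Qed.

Section ShortestWalk.
Variables (s t x : T) (A m m' B : seq T).
Hypotheses (shortP : is_shortest e w s t (A ++ x :: m ++ B))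
           (pm' : path e x m') (lm' : last x m' = last x m).

Let spliceP : is_path e s t (A ++ x :: m' ++ B).
Proof. by apply: is_path_splice pm' lm'; case: shortP. Qed.

Lemma shortest_section_le : pweight w (x :: m) <= pweight w (x :: m').
Proof.
have := shortP.2 _ spliceP.
by rewrite !pweight_split lm' lerD2r lerD2l.
Qed.

Lemma shortest_splice :
  pweight w (x :: m') <= pweight w (x :: m) ->
  is_shortest e w s t (A ++ x :: m' ++ B).
Proof.
move=> le_m'm; split=> [|Q pathQ]; first exact: spliceP.
apply: le_trans (shortP.2 Q pathQ).
by rewrite !pweight_split lm' lerD2r lerD2l.
Qed.

End ShortestWalk.

Lemma precedes_split (P : seq T) x y : precedes x y P ->
  exists A m B, [/\ P = A ++ x :: m ++ B, last x m = y & subpath P x y = x :: m].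
Proof.
case/and3P => xP yP le_ij.
set i := index x P in le_ij *; set j := index y P in le_ij *.
have lt_jP : (j < size P)%N by rewrite index_mem.
have take_j : take j.+1 P = rcons (take j P) y by rewrite (take_nth y) ?nth_index.
have size_take_j : size (take j P) = j by rewrite size_take lt_jP.
have sub_rcons : subpath P x y = rcons (drop i (take j P)) y.
  by rewrite /subpath take_j drop_rcons // size_take_j.
have head_sub : nth x (subpath P x y) 0 = x.
  by rewrite /subpath nth_drop addn0 nth_take ?nth_index // ltnS.
case E : (subpath P x y) head_sub => [|z m] /= Exz.
  by move: E; rewrite sub_rcons; case: (drop _ _).
subst z; exists (take i P), m, (drop j.+1 P); split=> //.
- rewrite -cat_cons -E /subpath catA.
  by rewrite -(take_takel P (leqW le_ij)) cat_take_drop cat_take_drop.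
- by have := congr1 (last x) E; rewrite sub_rcons last_rcons.
Qed.

Lemma Eset_subpath s t s' t' (P Q : seq T) x y :
  is_shortest e w s t P -> is_shortest e w s' t' Q ->
  precedes x y P -> precedes x y Q ->
  forall uv, uv \in pedges (subpath Q x y) -> Eset e w s t uv.
Proof.
move=> shortP shortQ /precedes_split[A [m [B [EP lm _]]]].
case/precedes_split => [A' [m' [B' [EQ lm' ->]]]] uv uv_m'.
rewrite {}EP in shortP; rewrite {}EQ in shortQ.
have pm := is_path_split_mid shortP.1.
have pm' := is_path_split_mid shortQ.1.
have lm'm : last x m' = last x m by rewrite lm lm'.
have le_m'm := shortest_section_le shortQ pm (esym lm'm).
exists (A ++ x :: m' ++ B); split; last exact: mem_pedges_split.
exact: shortest_splice shortP pm' lm'm le_m'm.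
Qed.

End Splicing.

Theorem lemma17 (T : finType) (R : realDomainType) (e : rel T) (w : T -> T -> R)
    (s1 t1 s2 t2 : T) (P1 P2 : seq T) (x y : T) :
  acyclic e ->
  is_shortest e w s1 t1 P1 ->
  is_shortest e w s2 t2 P2 ->
  precedes x y P1 -> precedes x y P2 ->
  forall uv : T * T,
    (uv \in pedges (subpath P1 x y)) || (uv \in pedges (subpath P2 x y)) ->
    Eset e w s1 t1 uv /\ Eset e w s2 t2 uv.
Proof.
move=> _ short1 short2 prec1 prec2 uv /orP[uv_P1 | uv_P2]; split.
- exact: (Eset_subpath short1 short1 prec1 prec1 uv_P1).
- exact: (Eset_subpath short2 short1 prec2 prec1 uv_P1).
- exact: (Eset_subpath short1 short2 prec1 prec2 uv_P2).
- exact: (Eset_subpath short2 short2 prec2 prec2 uv_P2).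
Qed.
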